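(* Let $K_{\alpha\beta}$ be a second order Killing tensor on an arbitrary Riemannian manifold $(M,g)$. Then the third of the Nijenhuis integrability conditions, $$0=N^{\delta}{}_{[\beta\gamma}K_{\alpha]\varepsilon}K^{\varepsilon}{}_{\delta},$$ is redundant, i.e.\ it is implied by the Killing equation together with the first two Nijenhuis conditions $$0=N^{\delta}{}_{[\beta\gamma}g_{\alpha]\delta},\qquad 0=N^{\delta}{}_{[\beta\gamma}K_{\alpha]\delta}.$$ The same holds true on a pseudo-Riemannian manifold.
   Context: A second order Killing tensor is a symmetric tensor field $K_{\alpha\beta}$ satisfying the Killing equation $\nabla_\alpha K_{\beta\gamma}+\nabla_\beta K_{\gamma\alpha}+\nabla_\gamma K_{\alpha\beta}=0$. It is regarded as an endomorphism field $K^{\alpha}{}_{\beta}$ via the metric $g$. Its Nijenhuis torsion is $N(X,Y)=K^2[X,Y]-K[KX,Y]-K[X,KY]+[KX,KY]$, given in local coordinates by $N^{\alpha}{}_{\beta\gamma}=K^{\alpha}{}_{\delta}K^{\delta}{}_{[\beta;\gamma]}+K^{\delta}{}_{[\beta}K^{\alpha}{}_{\gamma];\delta}$, where a semicolon denotes a covariant derivative and square brackets denote antisymmetrisation. The Nijenhuis integrability conditions are the three equations $0=N^{\delta}{}_{[\beta\gamma}g_{\alpha]\delta}$, $0=N^{\delta}{}_{[\beta\gamma}K_{\alpha]\delta}$, $0=N^{\delta}{}_{[\beta\gamma}K_{\alpha]\varepsilon}K^{\varepsilon}{}_{\delta}$; for an endomorphism with simple eigenvalues they are equivalent to integrability (the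 orthogonal complements of each eigenvector field form integrable distributions). The theorem does not assume that the eigenvalues of $K$ are simple. *)

(* R : realType, local chart U ⊆ R^n (points 'rV[R]_n). *)
From HB Require Import structures.
From mathcomp Require Import all_boot all_order all_algebra.
From mathcomp Require Import all_classical all_reals all_analysis.
Set Implicit Arguments. Unset Strict Implicit. Unset Printing Implicit Defensive.
Import Order.TTheory GRing.Theory Num.Theory.
Import numFieldNormedType.Exports.
Local Open Scope classical_set_scope.
Local Open Scope ring_scope.

Section Killing.
Variables (R : realType) (n : nat).
Notation pt := 'rV[R]_n.

Definition ebasis (i : 'I_n) : pt := delta_mx 0 i.

Definition partial (f : pt -> R) (i : 'I_n) (x : pt) : R := derive f x (ebasis i).

Fixpoint ipartial (ds : seq 'I_n) (f : pt -> R) : pt -> R :=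
  match ds with
  | [::] => f
  | i :: ds' => partial (ipartial ds' f) i
  end.

Definition smooth_on (U : set pt) (f : pt -> R) : Prop :=
  forall (ds : seq 'I_n) (x : pt), U x -> differentiable (ipartial ds f) x.

Definition gmx (g : pt -> 'I_n -> 'I_n -> R) (x : pt) : 'M[R]_n :=
  \matrix_(i, j) g x i j.

Definition ginv (g : pt -> 'I_n -> 'I_n -> R) (x : pt) (i j : 'I_n) : R :=
  invmx (gmx g x) i j.

Definition christoffel (g : pt -> 'I_n -> 'I_n -> R) (x : pt) (k i j : 'I_n) : R :=
  2^-1 * \sum_(l < n) ginv g x k l *
    (partial (fun y => g y l i) j x + partial (fun y => g y l j) i x
     - partial (fun y => g y i j) l x).

(* covK g K x a b c = K_{ab;c} = nabla_c K_{ab} *)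
Definition covK (g K : pt -> 'I_n -> 'I_n -> R) (x : pt) (a b c : 'I_n) : R :=
  partial (fun y => K y a b) c x
  - \sum_(d < n) (christoffel g x d c a * K x d b + christoffel g x d c b * K x a d).

Definition Kup (g K : pt -> 'I_n -> 'I_n -> R) (x : pt) (a b : 'I_n) : R :=
  \sum_(d < n) ginv g x a d * K x d b.

(* K^a_{b;c} = g^{ad} K_{db;c} (the Levi-Civita connection is metric) *)
Definition covKup (g K : pt -> 'I_n -> 'I_n -> R) (x : pt) (a b c : 'I_n) : R :=
  \sum_(d < n) ginv g x a d * covK g K x d b c.

Definition killing_on (U : set pt) (g K : pt -> 'I_n -> 'I_n -> R) : Prop :=
  forall x, U x -> forall a b c : 'I_n,
    covK g K x b c a + covK g K x c a b + covK g K x a b c = 0.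

Definition nijenhuis (g K : pt -> 'I_n -> 'I_n -> R) (x : pt) (a b c : 'I_n) : R :=
  \sum_(d < n) Kup g K x a d * (2^-1 * (covKup g K x d b c - covKup g K x d c b))
  + \sum_(d < n) 2^-1 * (Kup g K x d b * covKup g K x a c d
                         - Kup g K x d c * covKup g K x a b d).

Definition alt3 (T : 'I_n -> 'I_n -> 'I_n -> R) (b c a : 'I_n) : R :=
  6^-1 * (T b c a - T b a c + T c a b - T c b a + T a b c - T a c b).

Definition nij_cond (g K : pt -> 'I_n -> 'I_n -> R) (X : 'I_n -> 'I_n -> R)
    (x : pt) (b c a : 'I_n) : R :=
  alt3 (fun b' c' a' => \sum_(d < n) nijenhuis g K x d b' c' * X a' d) b c a.

Definition Ksq (g K : pt -> 'I_n -> 'I_n -> R) (x : pt) (a d : 'I_n) : R :=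
  \sum_(e < n) K x a e * Kup g K x e d.

End Killing.

(* At a point write T_{abc} = K_{ab;c} and L = K^a_b.  As the Levi-Civita
   connection is metric, the lowered Nijenhuis torsion g_{ad} N^d_{bc} is a
   bilinear expression in T and L, and the j-th Nijenhuis condition
   (j = 0, 1, 2, with K^0 = g) is the total antisymmetrisation of
   N^d_{bc} (K^j)_{ad}.  The symmetry of K and the Killing equation say that
   T is symmetric in its first two slots and has vanishing cyclic sum.  Using
   only these two relations, the antisymmetrisation for j = 2 is an explicit
   linear combination of those for j = 0 and j = 1 with their slots
   transformed by L and L^2, so it vanishes when they do. *)

From HB Require Import structures.
From mathcomp Require Import all_boot all_order all_algebra.
From mathcomp Require Import all_classical all_reals all_analysis.
From mathcomp Require Import ring lra.
Set Implicit Arguments. Unset Strict Implicit. Unset Printing Implicit Defensive.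
Import Order.TTheory GRing.Theory Num.Theory.
Import numFieldNormedType.Exports.
Local Open Scope classical_set_scope.
Local Open Scope ring_scope.

Section TensorMap.
Variables (R : comNzRingType) (n : nat).
Implicit Types (P Q S : 'M[R]_n) (F G : 'I_n -> 'I_n -> 'I_n -> R).
Local Notation I := (1 : 'M[R]_n).

Definition tmap3 P Q S F (b c a : 'I_n) : R :=
  \sum_e \sum_f \sum_h P e b * Q f c * S h a * F e f h.

Lemma tmap3D P Q S F G b c a :
  tmap3 P Q S (fun x y z => F x y z + G x y z) b c a
  = tmap3 P Q S F b c a + tmap3 P Q S G b c a.
Proof.
rewrite /tmap3 -big_split; apply: eq_bigr => e _; rewrite -big_split.
by apply: eq_bigr => f _; rewrite -big_split; apply: eq_bigr => h _; rewrite mulrDr.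
Qed.

Lemma tmap3N P Q S F b c a :
  tmap3 P Q S (fun x y z => - F x y z) b c a = - tmap3 P Q S F b c a.
Proof.
rewrite /tmap3 -sumrN; apply: eq_bigr => e _; rewrite -sumrN.
by apply: eq_bigr => f _; rewrite -sumrN; apply: eq_bigr => h _; rewrite mulrN.
Qed.

Lemma tmap3Z P Q S k F b c a :
  tmap3 P Q S (fun x y z => k * F x y z) b c a = k * tmap3 P Q S F b c a.
Proof.
rewrite /tmap3 mulr_sumr; apply: eq_bigr => e _; rewrite mulr_sumr.
by apply: eq_bigr => f _; rewrite mulr_sumr; apply: eq_bigr => h _; rewrite mulrCA.
Qed.

Lemma eq_tmap3 P Q S F G b c a : (forall x y z, F x y z = G x y z) ->
  tmap3 P Q S F b c a = tmap3 P Q S G b c a.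
Proof. by move=> FG; rewrite /tmap3; do 3!(apply: eq_bigr => ? _); rewrite FG. Qed.

Lemma tmap3_eq0 P Q S F b c a : (forall x y z, F x y z = 0) -> tmap3 P Q S F b c a = 0.
Proof.
move=> F0; rewrite /tmap3 big1 // => e _; rewrite big1 // => f _.
by rewrite big1 // => h _; rewrite F0 mulr0.
Qed.

Lemma tmap3_132 P Q S F b c a :
  tmap3 P Q S (fun x y z => F x z y) b c a = tmap3 P S Q F b a c.
Proof.
rewrite /tmap3; apply: eq_bigr => e _; rewrite exchange_big /=.
by apply: eq_bigr => f _; apply: eq_bigr => h _; ring.
Qed.

Lemma tmap3_213 P Q S F b c a :
  tmap3 P Q S (fun x y z => F y x z) b c a = tmap3 Q P S F c b a.
Proof. by rewrite /tmap3 exchange_big; do 3!(apply: eq_bigr => ? _); ring. Qed.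

Lemma tmap3_231 P Q S F b c a :
  tmap3 P Q S (fun x y z => F y z x) b c a = tmap3 Q S P F c a b.
Proof.
rewrite /tmap3 exchange_big; apply: eq_bigr => f _; rewrite exchange_big.
by apply: eq_bigr => h _; apply: eq_bigr => e _ /=; ring.
Qed.

Lemma tmap3_312 P Q S F b c a :
  tmap3 P Q S (fun x y z => F z x y) b c a = tmap3 S P Q F a b c.
Proof. by rewrite (tmap3_231 P Q S (fun x y z => F y z x)) tmap3_231. Qed.

Lemma tmap3_321 P Q S F b c a :
  tmap3 P Q S (fun x y z => F z y x) b c a = tmap3 S Q P F a c b.
Proof. by rewrite tmap3_132 tmap3_231. Qed.

Lemma sum_pull_last4 (G : 'I_n -> 'I_n -> 'I_n -> 'I_n -> R) :
  \sum_e \sum_f \sum_h \sum_i G e f h i = \sum_i \sum_e \sum_f \sum_h G e f h i.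
Proof.
transitivity (\sum_e \sum_f \sum_i \sum_h G e f h i).
  by apply: eq_bigr => e _; apply: eq_bigr => f _; rewrite exchange_big.
transitivity (\sum_e \sum_i \sum_f \sum_h G e f h i).
  by apply: eq_bigr => e _; rewrite exchange_big.
by rewrite exchange_big.
Qed.

Lemma mulr_sum2 (u v : 'I_n -> R) x y :
  x * (\sum_f u f) * (\sum_h v h) * y = \sum_f \sum_h x * u f * v h * y.
Proof.
rewrite [x * _]mulr_sumr !mulr_suml; apply: eq_bigr => f _.
by rewrite mulr_sumr mulr_suml; apply: eq_bigr => h _ /=; ring.
Qed.

Lemma tmap3_comp P Q S P' Q' S' F b c a :
  tmap3 P Q S (fun x y z => tmap3 P' Q' S' F x y z) b c a = tmap3 (P' *m P) (Q' *m Q) (S' *m S) F b c a.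
Proof.
rewrite /tmap3.
transitivity (\sum_e \sum_f \sum_h \sum_i \sum_j \sum_k
   (P e b * Q f c * S h a * (P' i e * Q' j f * S' k h * F i j k))).
  do 3!(apply: eq_bigr => ? _); rewrite big_distrr; apply: eq_bigr => ? _ /=.
  by rewrite big_distrr; apply: eq_bigr => ? _ /=; rewrite big_distrr.
rewrite sum_pull_last4; apply: eq_bigr => i _; rewrite sum_pull_last4; apply: eq_bigr => j _.
rewrite sum_pull_last4; apply: eq_bigr => k _; rewrite !mxE !big_distrl /=.
apply: eq_bigr => e _.
rewrite mulr_sum2; apply: eq_bigr => f _; apply: eq_bigr => h _; ring.
Qed.

Lemma tmap3_comp132 P Q S P' Q' S' F b c a :
  tmap3 P Q S (fun x y z => tmap3 P' Q' S' F x z y) b c a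
  = tmap3 (P' *m P) (Q' *m S) (S' *m Q) F b a c.
Proof. by rewrite (tmap3_132 P Q S (tmap3 P' Q' S' F)) tmap3_comp. Qed.

Lemma tmap3_comp213 P Q S P' Q' S' F b c a :
  tmap3 P Q S (fun x y z => tmap3 P' Q' S' F y x z) b c a
  = tmap3 (P' *m Q) (Q' *m P) (S' *m S) F c b a.
Proof. by rewrite (tmap3_213 P Q S (tmap3 P' Q' S' F)) tmap3_comp. Qed.

Lemma tmap3_comp231 P Q S P' Q' S' F b c a :
  tmap3 P Q S (fun x y z => tmap3 P' Q' S' F y z x) b c a
  = tmap3 (P' *m Q) (Q' *m S) (S' *m P) F c a b.
Proof. by rewrite (tmap3_231 P Q S (tmap3 P' Q' S' F)) tmap3_comp. Qed.

Lemma tmap3_comp312 P Q S P' Q' S' F b c a :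
  tmap3 P Q S (fun x y z => tmap3 P' Q' S' F z x y) b c a
  = tmap3 (P' *m S) (Q' *m P) (S' *m Q) F a b c.
Proof. by rewrite (tmap3_312 P Q S (tmap3 P' Q' S' F)) tmap3_comp. Qed.

Lemma tmap3_comp321 P Q S P' Q' S' F b c a :
  tmap3 P Q S (fun x y z => tmap3 P' Q' S' F z y x) b c a
  = tmap3 (P' *m S) (Q' *m Q) (S' *m P) F a c b.
Proof. by rewrite (tmap3_321 P Q S (tmap3 P' Q' S' F)) tmap3_comp. Qed.

Lemma sum_mx1l (G : 'I_n -> R) i : \sum_e I e i * G e = G i.
Proof.
rewrite (bigD1 i) //= big1 ?addr0; first by rewrite mxE eqxx mul1r.
by move=> e /negbTE ei; rewrite mxE ei mul0r.
Qed.

Lemma sum_mx1r (G : 'I_n -> R) i : \sum_e I i e * G e = G i.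
Proof.
by rewrite -[RHS](sum_mx1l G i); apply: eq_bigr => e _; rewrite !mxE eq_sym.
Qed.

Lemma tmap3_id23 P F b c a : tmap3 P 1 1 F b c a = \sum_e P e b * F e c a.
Proof.
apply: eq_bigr => e _.
transitivity (\sum_f I f c * (P e b * F e f a)); last by rewrite sum_mx1l.
apply: eq_bigr => f _; rewrite -(sum_mx1l (fun h => I f c * (P e b * F e f h)) a).
by apply: eq_bigr => h _; ring.
Qed.

Lemma tmap3_id12 S F b c a : tmap3 1 1 S F b c a = \sum_h S h a * F b c h.
Proof.
transitivity (\sum_e I e b * (\sum_h S h a * F e c h)); last first.
  by rewrite sum_mx1l.
apply: eq_bigr => e _.
transitivity (\sum_f I f c * (I e b * \sum_h S h a * F e f h)); last first.
  by rewrite sum_mx1l.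
by apply: eq_bigr => f _; rewrite !mulr_sumr; apply: eq_bigr => h _; ring.
Qed.

Lemma sum_mulmx (A B : 'M[R]_n) (X : 'I_n -> R) a :
  \sum_d A a d * (\sum_f B d f * X f) = \sum_f (A *m B) a f * X f.
Proof.
transitivity (\sum_d \sum_f A a d * B d f * X f).
  by apply: eq_bigr => d _; rewrite mulr_sumr; apply: eq_bigr => f _; rewrite mulrA.
by rewrite exchange_big; apply: eq_bigr => f _; rewrite mxE mulr_suml.
Qed.
End TensorMap.

Section Young.
Variables (R : realType) (n : nat).
Variables (T : 'I_n -> 'I_n -> 'I_n -> R) (L : 'M[R]_n).

Definition nijenhuis_low a b c := 2^-1 *
  (tmap3 L 1 1 T a b c - tmap3 L 1 1 T a c b + tmap3 1 1 L T a c b - tmap3 1 1 L T a b c).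

(* [nijenhuis_contr j b c a] is [N^d_{bc} (K^j)_{ad}]. *)
Definition nijenhuis_contr j := tmap3 1 1 (L ^+ j) (fun b c a => nijenhuis_low a b c).

Local Notation I := (1 : 'M[R]_n).
Implicit Types P Q S : 'M[R]_n.

(* [T a b c] plays the role of [K_{ab;c}] and [L] of [K^a_b]. *)
Hypothesis Tsym : forall a b c, T a b c = T b a c.
Hypothesis Tcyc : forall a b c, T a b c + T b c a + T c a b = 0.

Lemma tmap3_sym12 P Q S a b c : tmap3 P Q S T a b c = tmap3 Q P S T b a c.
Proof. by rewrite -tmap3_213; apply: eq_tmap3 => x y z; apply: Tsym. Qed.

Lemma tmap3_cyclic P Q S a b c :
  tmap3 P Q S T a b c + tmap3 Q S P T b c a + tmap3 S P Q T c a b = 0.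
Proof.
rewrite -(tmap3_231 P Q S T) -(tmap3_312 P Q S T) -!tmap3D.
by apply: tmap3_eq0 => x y z; apply: Tcyc.
Qed.

(* The relations for the other permutations of [b c a] are instances of
   these with [P Q S] permuted. *)
Lemma tmap3_young_relations P Q S b c a :
  tmap3 P Q S T b c a = tmap3 Q P S T c b a /\
  tmap3 P Q S T c a b = tmap3 Q P S T a c b /\
  tmap3 P Q S T a b c = tmap3 Q P S T b a c /\
  tmap3 P Q S T b c a + tmap3 Q S P T c a b + tmap3 S P Q T a b c = 0 /\
  tmap3 P Q S T b a c + tmap3 Q S P T a c b + tmap3 S P Q T c b a = 0.
Proof. by do !split; first [exact: tmap3_sym12 | exact: tmap3_cyclic]. Qed.

Lemma alt_nijenhuis_contr2E b c a : alt3 (nijenhuis_contr 2) b c a =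
  3^-1 * (tmap3 (L ^+ 2) 1 1 (alt3 (nijenhuis_contr 0)) b c a
          + tmap3 1 (L ^+ 2) 1 (alt3 (nijenhuis_contr 0)) b c a
          + tmap3 1 1 (L ^+ 2) (alt3 (nijenhuis_contr 0)) b c a)
  - 2/3 * (tmap3 L L 1 (alt3 (nijenhuis_contr 0)) b c a + tmap3 L 1 L (alt3 (nijenhuis_contr 0)) b c a
          + tmap3 1 L L (alt3 (nijenhuis_contr 0)) b c a)
  + 2/3 * (tmap3 L 1 1 (alt3 (nijenhuis_contr 1)) b c a + tmap3 1 L 1 (alt3 (nijenhuis_contr 1)) b c a
          + tmap3 1 1 L (alt3 (nijenhuis_contr 1)) b c a).
Proof.
rewrite /alt3 /nijenhuis_contr expr0 expr1.
rewrite !(tmap3Z, tmap3D, tmap3N).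
rewrite !(tmap3_comp, tmap3_comp132, tmap3_comp213, tmap3_comp231, tmap3_comp312, tmap3_comp321).
rewrite /nijenhuis_low.
rewrite !(tmap3Z, tmap3D, tmap3N).
rewrite !(tmap3_comp, tmap3_comp132, tmap3_comp213, tmap3_comp231, tmap3_comp312, tmap3_comp321).
rewrite ?mul1mx ?mulmx1 !mulmxE -?exprSr -?expr2 -?exprS.
(* Every atom is now [tmap3 P Q S T] with [P Q S] powers of [L] of total degree 3. *)
have := tmap3_young_relations I I (L ^+ 3) b c a; have := tmap3_young_relations I (L ^+ 3) I b c a.
have := tmap3_young_relations (L ^+ 3) I I b c a; have := tmap3_young_relations I L (L ^+ 2) b c a.
have := tmap3_young_relations I (L ^+ 2) L b c a; have := tmap3_young_relations L I (L ^+ 2) b c a.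
have := tmap3_young_relations L (L ^+ 2) I b c a; have := tmap3_young_relations (L ^+ 2) I L b c a.
have := tmap3_young_relations (L ^+ 2) L I b c a; have := tmap3_young_relations L L L b c a.
lra.
Qed.

Lemma alt_nijenhuis_contr2_eq0 :
  (forall b c a, alt3 (nijenhuis_contr 0) b c a = 0) ->
  (forall b c a, alt3 (nijenhuis_contr 1) b c a = 0) ->
  forall b c a, alt3 (nijenhuis_contr 2) b c a = 0.
Proof.
move=> alt0 alt1 b c a; rewrite alt_nijenhuis_contr2E.
have zero0 P Q S : tmap3 P Q S (alt3 (nijenhuis_contr 0)) b c a = 0 by apply: tmap3_eq0.
have zero1 P Q S : tmap3 P Q S (alt3 (nijenhuis_contr 1)) b c a = 0 by apply: tmap3_eq0.
by rewrite !zero0 !zero1; lra.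
Qed.
End Young.

Lemma eq_alt3 (R : realType) n (F G : 'I_n -> 'I_n -> 'I_n -> R) b c a :
  (forall b c a, F b c a = G b c a) -> alt3 F b c a = alt3 G b c a.
Proof. by move=> FG; rewrite /alt3 !FG. Qed.

Section Lowering.
Variables (R : realType) (n : nat) (g K : 'rV[R]_n -> 'I_n -> 'I_n -> R) (x : 'rV[R]_n).
Hypothesis g_unit : gmx g x \in unitmx.
Hypothesis g_sym : forall i j, g x i j = g x j i.
Hypothesis K_sym : forall i j, K x i j = K x j i.

Let Gi := invmx (gmx g x).
Let L := Gi *m gmx K x.
Let T := covK g K x.

Lemma Kup_mxE a b : Kup g K x a b = L a b.
Proof. by rewrite /Kup mxE; apply: eq_bigr => d _; rewrite /ginv mxE. Qed.

Lemma mul_metric_inv : gmx g x *m Gi = 1.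
Proof. exact: mulmxV. Qed.

Lemma mul_inv_metric : Gi *m gmx g x = 1.
Proof. exact: mulVmx. Qed.

Lemma trmx_Kup : L^T = gmx K x *m Gi.
Proof.
have symT (h : 'rV[R]_n -> 'I_n -> 'I_n -> R) : (forall i j, h x i j = h x j i) ->
    (gmx h x)^T = gmx h x.
  by move=> hs; apply/matrixP => i j; rewrite !mxE hs.
by rewrite trmx_mul trmx_inv !symT.
Qed.

Lemma nijenhuis_lowerE a b c :
  \sum_d g x a d * nijenhuis g K x d b c = nijenhuis_low T L a b c.
Proof.
have gE i : g x a i = gmx g x a i by rewrite mxE.
have gC y z : \sum_d g x a d * covKup g K x d y z = T a y z.
  have := sum_mulmx (gmx g x) Gi (fun e => T e y z) a.
  rewrite mul_metric_inv sum_mx1r => <-.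
  by apply: eq_bigr => d _; rewrite mxE.
have KC y z : \sum_f K x a f * covKup g K x f y z = \sum_e L e a * T e y z.
  transitivity (\sum_e L^T a e * T e y z); last by apply: eq_bigr => e _; rewrite mxE.
  by rewrite trmx_Kup -sum_mulmx; apply: eq_bigr => e _; rewrite mxE.
rewrite /nijenhuis /nijenhuis_low !tmap3_id23 !tmap3_id12.
under eq_bigr => d _ do rewrite mulrDr.
rewrite big_split /=.
have -> : \sum_i g x a i * \sum_d Kup g K x i d * (2^-1 * (covKup g K x d b c - covKup g K x d c b))
    = 2^-1 * (\sum_e L e a * T e b c - \sum_e L e a * T e c b).
  under eq_bigr => i _ do under eq_bigr => d _ do rewrite Kup_mxE.
  under eq_bigr => i _ do rewrite gE.
  rewrite sum_mulmx mulmxA mul_metric_inv mul1mx -!KC mulrBr !mulr_sumr -sumrB.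
  by apply: eq_bigr => f _; rewrite mxE; ring.
have -> : \sum_i g x a i * \sum_d 2^-1 *
      (Kup g K x d b * covKup g K x i c d - Kup g K x d c * covKup g K x i b d)
    = 2^-1 * (\sum_h L h b * T a c h - \sum_h L h c * T a b h).
  transitivity (\sum_d 2^-1 * (Kup g K x d b * (\sum_i g x a i * covKup g K x i c d)
                              - Kup g K x d c * (\sum_i g x a i * covKup g K x i b d))).
    under eq_bigr => i _ do rewrite mulr_sumr.
    rewrite exchange_big; apply: eq_bigr => d _.
    by rewrite !mulr_sumr -sumrB mulr_sumr; apply: eq_bigr => i _; ring.
  by under eq_bigr => d _ do rewrite !gC !Kup_mxE; rewrite -mulr_sumr sumrB.
ring.
Qed.

Lemma nij_cond_contrE j (X : 'I_n -> 'I_n -> R) b c a :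
  (forall a d, X a d = ((L ^+ j)^T *m gmx g x) a d) ->
  nij_cond g K X x b c a = alt3 (nijenhuis_contr T L j) b c a.
Proof.
move=> XE; have contrE b' c' a' :
    \sum_d nijenhuis g K x d b' c' * X a' d = nijenhuis_contr T L j b' c' a'.
  rewrite /nijenhuis_contr tmap3_id12.
  under eq_bigr => d _ do rewrite XE mxE mulr_sumr.
  rewrite exchange_big; apply: eq_bigr => e _.
  rewrite -nijenhuis_lowerE mulr_sumr; apply: eq_bigr => d _; rewrite !mxE; ring.
exact: eq_alt3.
Qed.

Lemma nij_cond_metric b c a :
  nij_cond g K (g x) x b c a = alt3 (nijenhuis_contr T L 0) b c a.
Proof. by apply: nij_cond_contrE => a' d; rewrite expr0 trmx1 mul1mx mxE. Qed.

Lemma nij_cond_Killing b c a :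
  nij_cond g K (K x) x b c a = alt3 (nijenhuis_contr T L 1) b c a.
Proof.
apply: nij_cond_contrE => a' d.
by rewrite expr1 trmx_Kup -mulmxA mul_inv_metric mulmx1 mxE.
Qed.

Lemma nij_cond_Ksq b c a :
  nij_cond g K (Ksq g K x) x b c a = alt3 (nijenhuis_contr T L 2) b c a.
Proof.
apply: nij_cond_contrE => a' d.
rewrite expr2 -mulmxE trmx_mul trmx_Kup -!mulmxA mul_inv_metric mulmx1 mxE.
by rewrite /Ksq; apply: eq_bigr => e _; rewrite Kup_mxE [gmx K x a' e]mxE.
Qed.
End Lowering.

Lemma covK_sym (R : realType) n (U : set 'rV[R]_n) (g K : 'rV[R]_n -> 'I_n -> 'I_n -> R)
    (x : 'rV[R]_n) :
  open U -> U x -> (forall y, U y -> forall i j, K y i j = K y j i) ->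
  forall a b c, covK g K x a b c = covK g K x b a c.
Proof.
move=> oU Ux Ksym a b c; rewrite /covK.
have -> : partial (fun y => K y a b) c x = partial (fun y => K y b a) c x.
  rewrite /partial; apply: near_eq_derive; near=> y; apply: Ksym.
  by near: y; apply: open_nbhs_nbhs.
congr (_ - _); apply: eq_bigr => d _.
by rewrite addrC (Ksym x Ux a d) (Ksym x Ux d b).
Unshelve. all: by end_near.
Qed.

Theorem theorem1 (R : realType) (n : nat) (U : set 'rV[R]_n)
    (g K : 'rV[R]_n -> 'I_n -> 'I_n -> R) :
  open U ->
  (* g is a smooth pseudo-Riemannian metric on U (any signature) *)
  (forall i j, smooth_on U (fun x => g x i j)) ->
  (forall x, U x -> forall i j, g x i j = g x j i) ->
  (forall x, U x -> gmx g x \in unitmx) ->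
  (* K is a smooth symmetric second order tensor field satisfying the Killing equation *)
  (forall i j, smooth_on U (fun x => K x i j)) ->
  (forall x, U x -> forall i j, K x i j = K x j i) ->
  killing_on U g K ->
  (* first two Nijenhuis conditions *)
  (forall x, U x -> forall b c a, nij_cond g K (g x) x b c a = 0) ->
  (forall x, U x -> forall b c a, nij_cond g K (K x) x b c a = 0) ->
  (* third Nijenhuis condition *)
  forall x, U x -> forall b c a, nij_cond g K (Ksq g K x) x b c a = 0.
Proof.
move=> oU _ g_sym g_unit _ K_sym kill nij_g nij_K x Ux b c a.
have gx := g_unit x Ux; have gsx := g_sym x Ux; have Ksx := K_sym x Ux.
rewrite (nij_cond_Ksq gx gsx Ksx).
apply: alt_nijenhuis_contr2_eq0 => [a' b' c' | a' b' c' | b' c' a' | b' c' a'].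
- exact: covK_sym oU Ux K_sym a' b' c'.
- exact: kill x Ux c' a' b'.
- by rewrite -(nij_cond_metric gx gsx Ksx); apply: nij_g.
- by rewrite -(nij_cond_Killing gx gsx Ksx); apply: nij_K.
Qed.
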